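(* Let $i\le k$ be positive integers and let $\rho$ be an $i$-polymatroid on $E$ that is an excluded minor for $\mathcal{D}_k$. Then for each $j$ with $i\le j\le k$, the $j$-dual of $\rho$ is an excluded minor for $\mathcal{D}_k$, and so is the $j$-polymatroid $\rho^j$ defined by $\rho^j(X)=\rho(X)+(j-i)|X|$ for $X\subseteq E$.
   Context: A polymatroid on $E$ is a function $\rho:2^E\to\mathbb{Z}$ that is normalized, non-decreasing and submodular; it is an $i$-polymatroid if $\rho(\{e\})\le i$ for all $e$. Any $i$-polymatroid is a $j$-polymatroid for $j\ge i$; its $j$-dual is $X\mapsto j|X|-\rho(E)+\rho(E-X)$. $\mathcal{D}_k$ is the class of polymatroids expressible as $r_{M_1}+\cdots+r_{M_k}$ for matroids $M_1,\dots,M_k$ on the ground set. Deletion and contraction: $\rho_{\backslash A}(X)=\rho(X)$, $\rho_{/A}(X)=\rho(X\cup A)-\rho(A)$ for $X\subseteq E-A$; minors are $(\rho_{\backslash A})_{/B}$ with $A,B$ disjoint, proper if $A\cup B\ne\emptyset$. An excluded minor for $\mathcal{D}_k$ is a polymatroid not in $\mathcal{D}_k$ all of whose proper minors are in $\mathcal{D}_k$. *)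

(* A polymatroid on a ground set E is modelled as a pair
   (E, rho) with E : {set T} for a finite type T and rho : {set T} -> int;
   only the values of rho on subsets of E matter. *)
From mathcomp Require Import all_boot all_order all_algebra.
Set Implicit Arguments. Unset Strict Implicit. Unset Printing Implicit Defensive.
Import Order.TTheory GRing.Theory Num.Theory.
Local Open Scope ring_scope.

Section Poly.
Variable T : finType.

Definition polymatroid (E : {set T}) (rho : {set T} -> int) : Prop :=
  [/\ rho set0 = 0,
      (forall X Y : {set T}, Y \subset E -> X \subset Y -> rho X <= rho Y) &
      (forall X Y : {set T}, X \subset E -> Y \subset E ->
          rho (X :|: Y) + rho (X :&: Y) <= rho X + rho Y)].

Definition ipolymatroid (i : nat) (E : {set T}) (rho : {set T} -> int) : Prop :=
  polymatroid E rho /\ (forall e, e \in E -> rho [set e] <= i%:Z).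

Definition matroid_rank (E : {set T}) (r : {set T} -> int) : Prop :=
  [/\ (forall X : {set T}, X \subset E -> 0 <= r X <= #|X|%:Z),
      (forall X Y : {set T}, Y \subset E -> X \subset Y -> r X <= r Y) &
      (forall X Y : {set T}, X \subset E -> Y \subset E ->
          r (X :|: Y) + r (X :&: Y) <= r X + r Y)].

Definition inD (k : nat) (E : {set T}) (rho : {set T} -> int) : Prop :=
  exists rs : 'I_k -> ({set T} -> int),
    (forall m, matroid_rank E (rs m)) /\
    (forall X : {set T}, X \subset E -> rho X = \sum_(m < k) rs m X).

(* the minor (rho \ A) / B, a polymatroid on E - (A u B) *)
Definition minor_fun (rho : {set T} -> int) (B : {set T}) : {set T} -> int :=
  fun X => rho (X :|: B) - rho B.

Definition excluded_minor (k : nat) (E : {set T}) (rho : {set T} -> int) : Prop :=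
  [/\ polymatroid E rho, ~ inD k E rho &
      (forall A B : {set T}, A \subset E -> B \subset E -> [disjoint A & B] ->
          A :|: B != set0 ->
          inD k (E :\: (A :|: B)) (minor_fun rho B))].

Definition jdual (j : nat) (E : {set T}) (rho : {set T} -> int) : {set T} -> int :=
  fun X => (j * #|X|)%:Z - rho E + rho (E :\: X).

Definition shift_poly (i j : nat) (rho : {set T} -> int) : {set T} -> int :=
  fun X => rho X + ((j - i) * #|X|)%:Z.

End Poly.

From mathcomp Require Import all_boot all_order all_algebra zify.
Import Order.TTheory GRing.Theory Num.Theory.
Set Implicit Arguments. Unset Strict Implicit. Unset Printing Implicit Defensive.
Local Open Scope ring_scope.

(* The j-dual is the instance w = j of the weighted dual
   f^w(X) = sum_(e in X) w(e) - f(E) + f(E - X), which for f({e}) <= w(e) is again a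
   polymatroid, is an involution, and turns the minor of f deleting B and
   contracting A into the minor of f^w deleting A and contracting B.
   If w <= k it also maps D_k into D_k: when f = r_1 + ... + r_k, every e is a loop
   of at least k - w(e) of the r_m, and dualising each r_m with weight 0 on k - w(e)
   such loops and 1 elsewhere gives matroids adding up to f^w. Hence f^w is an
   excluded minor for D_k whenever f is; and rho^j is the j-dual of the i-dual. *)

Lemma sum_indicator (I : finType) (S : {set I}) :
  \sum_(i : I) ((i \in S) : nat)%:Z = #|S|%:Z.
Proof.
rewrite -natz -sumr_const [RHS]big_mkcond /=.
by apply: eq_bigr => i _; case: (i \in S).
Qed.

Section WeightedDual.
Variable T : finType.
Implicit Types (E X Y Z A B : {set T}) (f : {set T} -> int) (w : T -> nat).

Lemma sum_natz_const X (n : nat) : \sum_(e in X) n%:Z = (n * #|X|)%N%:Z.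
Proof. by rewrite sumr_const -mulr_natr natz PoszM. Qed.

Lemma subset_imply A B : A \subset B -> forall e, (e \in A) ==> (e \in B).
Proof. by move=> /subsetP AB e; apply/implyP/AB. Qed.

Lemma disjoint_nand A B : [disjoint A & B] -> forall e, ~~ ((e \in A) && (e \in B)).
Proof. by move=> AB e; apply/andP => -[eA]; rewrite (disjointFr AB eA). Qed.

Ltac membership_cases :=
  rewrite ?inE; repeat match goal with |- context [?x \in ?A] => case: (x \in A) end; done.

Definition submodular E f := forall X Y, X \subset E -> Y \subset E ->
  f (X :|: Y) + f (X :&: Y) <= f X + f Y.

Lemma polymatroid_ge0 E f : polymatroid E f -> forall X, X \subset E -> 0 <= f X.
Proof. by case=> f0 f_mono _ X XE; rewrite -f0 f_mono ?sub0set. Qed.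

Lemma matroid_rank_polymatroid E r : matroid_rank E r -> polymatroid E r.
Proof.
case=> r_bnd r_mono r_sub; split=> //.
by have := r_bnd _ (sub0set E); rewrite cards0; lia.
Qed.

Lemma sum_setUI (F : T -> int) X Y :
  \sum_(e in X :|: Y) F e + \sum_(e in X :&: Y) F e =
  \sum_(e in X) F e + \sum_(e in Y) F e.
Proof.
rewrite (big_setID (A := X :|: Y) X) setUK setDUl setDv set0U.
by rewrite [in RHS](big_setID (A := Y) X) setIC addrAC addrA.
Qed.

Lemma submodular_sum_set1 E f Y Z :
  (forall X, X \subset E -> 0 <= f X) -> submodular E f ->
  Y \subset E -> Z \subset E -> f (Y :|: Z) <= f Y + \sum_(z in Z) f [set z].
Proof.
move=> f_ge0 f_sub YE ZE.
suff sum_seq s : {subset s <= E} ->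
    f (Y :|: [set:: s]) <= f Y + \sum_(z <- s) f [set z].
  rewrite -big_enum -{1}(set_enum Z); apply: sum_seq => z.
  by rewrite mem_enum => /(subsetP ZE).
elim: s => [|x s IHs] sE.
  by rewrite big_nil addr0 set_nil setU0.
have xE : x \in E by apply: sE; rewrite mem_head.
have {}sE : {subset s <= E} by move=> z zs; apply: sE; rewrite inE zs orbT.
have YsE : Y :|: [set:: s] \subset E.
  by rewrite subUset YE; apply/subsetP => z; rewrite inE => /sE.
have xE1 : [set x] \subset E by rewrite sub1set.
rewrite big_cons set_cons setUCA [x |: _]setUC.
have := f_sub _ _ YsE xE1.
have := f_ge0 _ (subset_trans (subsetIr (Y :|: [set:: s]) _) xE1).
have := IHs sE; set S := \sum_(_ <- _) _; lia.
Qed.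

Definition wdual w E f X := \sum_(e in X) (w e)%:Z - f E + f (E :\: X).

Lemma wdual0 w E f : wdual w E f set0 = 0.
Proof. by rewrite /wdual big_set0 setD0 add0r addNr. Qed.

Lemma submodular_wdual w E f : submodular E f -> submodular E (wdual w E f).
Proof.
move=> f_sub X Y XE YE; rewrite /wdual setDUr setDIr.
have := f_sub _ _ (subsetDl E X) (subsetDl E Y); have := sum_setUI (fun e => (w e)%:Z) X Y.
set sXY := \sum_(e in X :|: Y) _; set sXiY := \sum_(e in X :&: Y) _.
set sX := \sum_(e in X) _; set sY := \sum_(e in Y) _; lia.
Qed.

Lemma le_wdual w E f X Y : polymatroid E f -> (forall e, e \in E -> f [set e] <= w e) ->
  X \subset Y -> Y \subset E -> wdual w E f X <= wdual w E f Y.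
Proof.
move=> f_poly f_le_w XY YE; have [_ _ f_sub] := f_poly.
have YXE : Y :\: X \subset E := subset_trans (subsetDl Y X) YE.
have EX : E :\: X = (E :\: Y) :|: (Y :\: X).
  apply/setP => e; move: (subset_imply XY e) (subset_imply YE e); membership_cases.
have sum_le : \sum_(e in Y :\: X) f [set e] <= \sum_(e in Y :\: X) (w e)%:Z.
  by apply: ler_sum => e /(subsetP YXE) /f_le_w.
have := submodular_sum_set1 (polymatroid_ge0 f_poly) f_sub (subsetDl E Y) YXE.
rewrite /wdual -EX (big_setID (A := Y) X) (setIidPr XY) /=.
move: sum_le; set sYX := \sum_(e in Y :\: X) _; set sYXw := \sum_(e in Y :\: X) _.
set sX := \sum_(e in X) _; lia.
Qed.

Lemma wdual_polymatroid w E f : polymatroid E f ->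
  (forall e, e \in E -> f [set e] <= w e) -> polymatroid E (wdual w E f).
Proof.
move=> f_poly f_le_w; have [_ _ f_sub] := f_poly; split.
- exact: wdual0.
- by move=> X Y YE XY; apply: le_wdual.
- exact: submodular_wdual.
Qed.

Lemma wdual_set1_le w E f e : polymatroid E f -> e \in E -> wdual w E f [set e] <= w e.
Proof.
case=> _ f_mono _ eE; rewrite /wdual big_set1.
by have := f_mono _ _ (subxx E) (subsetDl E [set e]); lia.
Qed.

Lemma wdual_matroid_rank w E r : matroid_rank E r ->
  (forall e, e \in E -> r [set e] <= w e) -> (forall e, e \in E -> (w e <= 1)%N) ->
  matroid_rank E (wdual w E r).
Proof.
move=> r_mat r_le_w w_le1; have r_poly := matroid_rank_polymatroid r_mat.
have [_ rw_mono rw_sub] := wdual_polymatroid r_poly r_le_w.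
split=> // X XE; apply/andP; split.
  by rewrite -(wdual0 w E r); apply: le_wdual r_poly r_le_w (sub0set X) XE.
have w_le_card : \sum_(e in X) (w e)%:Z <= #|X|%:Z.
  rewrite -natz -sumr_const; apply: ler_sum => e /(subsetP XE) /w_le1.
  by rewrite lez_nat.
have [_ r_mono _] := r_poly.
have := r_mono _ _ (subxx E) (subsetDl E X); rewrite /wdual.
by move: w_le_card; set s := \sum_(e in X) _; lia.
Qed.

Lemma minor_fun_set1_le E f A e : polymatroid E f -> A \subset E -> e \in E ->
  minor_fun f A [set e] <= f [set e].
Proof.
move=> f_poly AE eE; have [_ _ f_sub] := f_poly.
have eE1 : [set e] \subset E by rewrite sub1set.
have := f_sub _ _ eE1 AE; have := polymatroid_ge0 f_poly (subset_trans (subsetIl _ A) eE1).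
by rewrite /minor_fun; lia.
Qed.

Lemma wdual_minor w E f A B X : A \subset E -> B \subset E -> [disjoint A & B] ->
  X \subset E :\: (A :|: B) ->
  minor_fun (wdual w E f) B X = wdual w (E :\: (A :|: B)) (minor_fun f A) X.
Proof.
move=> AE BE AB XE'.
have XB : X :&: B = set0.
  apply/setP => e; move: (subset_imply XE' e); membership_cases.
have EAB_A : E :\: (A :|: B) :|: A = E :\: B.
  apply/setP => e; move: (subset_imply AE e) (disjoint_nand AB e); membership_cases.
have EAB_X_A : (E :\: (A :|: B)) :\: X :|: A = E :\: (X :|: B).
  apply/setP => e; move: (subset_imply AE e) (disjoint_nand AB e) (subset_imply XE' e).
  membership_cases.
have := sum_setUI (fun e => (w e)%:Z) X B; rewrite XB big_set0 addr0.
rewrite /minor_fun /wdual EAB_A EAB_X_A.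
set sXB := \sum_(e in X :|: B) _; set sX := \sum_(e in X) _; set sB := \sum_(e in B) _; lia.
Qed.

Lemma wdual_wdual w' w E f X : X \subset E ->
  wdual w' E (wdual w E f) X = f X - f set0 + \sum_(e in X) ((w' e)%:Z - (w e)%:Z).
Proof.
move=> XE; rewrite /wdual setDv setDDr setDv set0U (setIidPr XE) sumrB.
rewrite (big_setID (A := E) X) (setIidPr XE) /=.
set sX := \sum_(e in X) _; set sX' := \sum_(e in X) _; set sEX := \sum_(e in E :\: X) _; lia.
Qed.

Lemma eq_inD k E f g : inD k E f -> (forall X, X \subset E -> f X = g X) -> inD k E g.
Proof. by move=> [rs [rs_mat f_sum]] fg; exists rs; split=> // X XE; rewrite -fg ?f_sum. Qed.

Lemma eq_excluded_minor k E f g : excluded_minor k E f ->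
  (forall X, X \subset E -> f X = g X) -> excluded_minor k E g.
Proof.
move=> [[f0 f_mono f_sub] f_notD f_minors] fg.
have fg_sub X Y : X \subset Y -> Y \subset E -> f X = g X.
  by move=> XY YE; exact/fg/(subset_trans XY).
split.
- split.
  + by rewrite -fg ?sub0set.
  + by move=> X Y YE XY; rewrite -(fg_sub X Y) // -fg //; apply: f_mono.
  + move=> X Y XE YE; rewrite -!fg ?f_sub // ?subUset ?XE //.
    exact: subset_trans (subsetIl X Y) XE.
- by move=> g_D; apply/f_notD/(eq_inD g_D) => X XE; rewrite fg.
- move=> A B AE BE AB AB0; apply: eq_inD (f_minors A B AE BE AB AB0) _ => X XE'.
  have XE : X \subset E := subset_trans XE' (subsetDl E _).
  by rewrite /minor_fun -!fg ?subUset ?XE.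
Qed.

Lemma matroid_rank_set1 E r e : matroid_rank E r -> e \in E ->
  r [set e] = (r [set e] != 0 : nat)%:Z.
Proof.
case=> r_bnd _ _ eE; have := r_bnd [set e]; rewrite cards1 sub1set eE.
by case: (r [set e]) => [[|[|n]]|n] //= /(_ isT).
Qed.

Lemma inD_wdual k w E f : (forall e, e \in E -> (w e <= k)%N) ->
  (forall e, e \in E -> f [set e] <= w e) -> inD k E f -> inD k E (wdual w E f).
Proof.
move=> w_le_k f_le_w [rs [rs_mat f_sum]].
(* [Bs e] is a set of exactly k - w e matroids in which e is a loop; matroid m is
   dualised with weight 0 on the e with m \in Bs e, so the weights of e add up to w e. *)
pose loops e := [set m | rs m [set e] == 0].
have f_set1 e : e \in E -> f [set e] = #|~: loops e|%:Z.
  move=> eE; rewrite f_sum ?sub1set // -sum_indicator.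
  by apply: eq_bigr => m _; rewrite (matroid_rank_set1 (rs_mat m) eE) !inE.
have Bs_ex e : exists B : {set 'I_k}, e \in E -> B \subset loops e /\ #|B| = (k - w e)%N.
  case: (boolP (e \in E)) => eE; last by exists set0.
  have : (k - w e <= #|loops e|)%N.
    have := f_le_w e eE; rewrite f_set1 // lez_nat.
    by have := cardsC (loops e); rewrite card_ord; lia.
  case/card_geqP => s [s_uniq s_size s_sub]; exists [set m in s] => _; split.
    by apply/subsetP => m; rewrite inE => /s_sub.
  by rewrite cardsE (card_uniqP s_uniq).
have [Bs Bs_spec] := fin_all_exists Bs_ex.
pose ws m e := (m \notin Bs e : nat).
exists (fun m => wdual (ws m) E (rs m)); split.
  move=> m; apply: wdual_matroid_rank (rs_mat m) _ _ => [e eE|e _]; last exact: leq_b1.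
  rewrite (matroid_rank_set1 (rs_mat m) eE) /ws lez_nat.
  case: (boolP (m \in Bs e)) => [/(subsetP (proj1 (Bs_spec e eE)))|_]; last exact: leq_b1.
  by rewrite inE => ->.
move=> X XE; rewrite /wdual !big_split /= sumrN -!f_sum ?subsetDl //.
congr (_ - _ + _); rewrite exchange_big /=; apply: eq_bigr => e /(subsetP XE) eE.
have [_ card_Bs] := Bs_spec e eE.
rewrite (eq_bigr (fun m => ((m \in ~: Bs e) : nat)%:Z)) => [|m _]; last by rewrite inE.
by rewrite sum_indicator; have := cardsC (Bs e); rewrite card_ord; have := w_le_k e eE; lia.
Qed.

Lemma excluded_minor_wdual k w E f : (forall e, e \in E -> (w e <= k)%N) ->
  (forall e, e \in E -> f [set e] <= w e) ->
  excluded_minor k E f -> excluded_minor k E (wdual w E f).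
Proof.
move=> w_le_k f_le_w [f_poly f_notD f_minors]; have [f0 _ _] := f_poly; split.
- exact: wdual_polymatroid.
- move=> fw_D; apply: f_notD.
  have fw_le_w e (eE : e \in E) := wdual_set1_le w f_poly eE.
  apply: eq_inD (inD_wdual w_le_k fw_le_w fw_D) _ => X XE.
  by rewrite wdual_wdual // big1 => [|e _]; rewrite ?subrr // f0 subr0 addr0.
- move=> A B AE BE AB AB0.
  have := f_minors B A BE AE; rewrite disjoint_sym setUC => /(_ AB AB0) fA_D.
  have in_E e : e \in E :\: (A :|: B) -> e \in E := subsetP (subsetDl E _) e.
  have w_le_k' e (eE' : e \in E :\: (A :|: B)) := w_le_k e (in_E e eE').
  have fA_le_w e : e \in E :\: (A :|: B) -> minor_fun f A [set e] <= w e.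
    move=> /in_E eE; apply: le_trans (f_le_w e eE).
    exact: minor_fun_set1_le f_poly AE eE.
  apply: eq_inD (inD_wdual w_le_k' fA_le_w fA_D) _ => X XE'.
  by rewrite (wdual_minor _ _ AE BE AB XE').
Qed.

End WeightedDual.

Theorem corollary4p2 (T : finType) (E : {set T}) (rho : {set T} -> int)
    (i k : nat) :
  (0 < i)%N -> (i <= k)%N ->
  ipolymatroid i E rho -> excluded_minor k E rho ->
  forall j : nat, (i <= j)%N -> (j <= k)%N ->
    excluded_minor k E (jdual j E rho) /\
    excluded_minor k E (shift_poly i j rho).
Proof.
move=> _ ik [rho_poly rho_le_i] rho_ex j ij jk; have [rho0 _ _] := rho_poly.
have i_le_j : i%:Z <= j%:Z by rewrite lez_nat.
have rho_le_j e (eE : e \in E) : rho [set e] <= j%:Z := le_trans (rho_le_i e eE) i_le_j.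
split.
  apply: eq_excluded_minor (excluded_minor_wdual (w := fun=> j) _ rho_le_j rho_ex) _ => // X _.
  by rewrite /wdual sum_natz_const.
pose rho_i := wdual (fun=> i) E rho.
have rho_i_ex : excluded_minor k E rho_i := excluded_minor_wdual (fun _ _ => ik) rho_le_i rho_ex.
have rho_i_le_j e (eE : e \in E) : rho_i [set e] <= j%:Z.
  exact: le_trans (wdual_set1_le _ rho_poly eE) i_le_j.
apply: eq_excluded_minor (excluded_minor_wdual (w := fun=> j) _ rho_i_le_j rho_i_ex) _ => // X XE.
rewrite wdual_wdual // rho0 subr0 /shift_poly -sum_natz_const.
by congr (_ + _); apply: eq_bigr => e _; rewrite subzn.
Qed.
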